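(* Let $(\mathfrak{g},[\cdot,\cdot]_{\mathfrak{g}},\phi_{\mathfrak{g}})$ and $(\mathfrak{g}^*,[\cdot,\cdot]_{\mathfrak{g}^*},\phi_{\mathfrak{g}}^* )$ be two weakly involutive Hom-Lie algebras ($\mathfrak g$ finite-dimensional). Then $(\mathfrak g,\mathfrak g^*;\mathrm{ad}^\circ,\mathfrak{ad}^\circ)$ is a matched pair of Hom-Lie algebras if and only if $\Delta[x,y]_{\mathfrak g}=\mathrm{ad}_{\phi_{\mathfrak g}(x)}\Delta(y)-\mathrm{ad}_{\phi_{\mathfrak g}(y)}\Delta(x)$ for all $x,y\in\mathfrak g$, where $\Delta:\mathfrak g\to\mathfrak g\otimes\mathfrak g$ is defined by $\langle\Delta(x),a\otimes b\rangle=\langle x,[a,b]_{\mathfrak g^*}\rangle$.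
   Context: A Hom-Lie algebra $(\mathfrak{h},[\cdot,\cdot]_{\mathfrak{h}},\phi_{\mathfrak{h}})$: skew-symmetric bilinear bracket and linear map with $\phi_{\mathfrak h}[x,y]=[\phi_{\mathfrak h}x,\phi_{\mathfrak h}y]$ and $[\phi_{\mathfrak h}(x),[y,z]]+[\phi_{\mathfrak h}(y),[z,x]]+[\phi_{\mathfrak h}(z),[x,y]]=0$; weakly involutive if $[\phi_{\mathfrak h}^2(x),y]=[x,y]$. A representation $(V,\beta,\rho)$: $\beta\in\mathfrak{gl}(V)$, $\rho:\mathfrak h\to\mathfrak{gl}(V)$ with $\rho(\phi_{\mathfrak h}(x))\beta=\beta\rho(x)$ and $\rho([x,y])\beta=\rho(\phi_{\mathfrak h}(x))\rho(y)-\rho(\phi_{\mathfrak h}(y))\rho(x)$. For $z\in\mathfrak g$, $t\in\mathfrak g\otimes\mathfrak g$: $\mathrm{ad}_zt=(\mathrm{ad}_z\otimes\phi_{\mathfrak g}+\phi_{\mathfrak g}\otimes\mathrm{ad}_z)t$, $\mathrm{ad}_zy=[z,y]_{\mathfrak g}$. $\mathrm{ad}^\circ:\mathfrak g\to\mathfrak{gl}(\mathfrak g^* )$, $\langle\mathrm{ad}^\circ_xa,y\rangle=-\langle a,[\phi_{\mathfrak g}(x),y]_{\mathfrak g}\rangle$; $\mathfrak{ad}^\circ:\mathfrak g^*\to\mathfrak{gl}(\mathfrak g)$, $\langle\mathfrak{ad}^\circ_ax,b\rangle=-\langle x,[\phi_{\mathfrak g}^*(a),b]_{\mathfrak g^*}\rangle$.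 A matched pair $(\mathfrak g,\mathfrak g';\rho,\rho')$ of Hom-Lie algebras: Hom-Lie algebras $\mathfrak g,\mathfrak g'$, a representation $(\mathfrak g',\phi_{\mathfrak g'},\rho)$ of $\mathfrak g$ and a representation $(\mathfrak g,\phi_{\mathfrak g},\rho')$ of $\mathfrak g'$ with, for all $x,y\in\mathfrak g$, $x',y'\in\mathfrak g'$: $\rho'(\phi_{\mathfrak g'}(x'))[x,y]_{\mathfrak g}=[\rho'(x')x,\phi_{\mathfrak g}(y)]_{\mathfrak g}+[\phi_{\mathfrak g}(x),\rho'(x')y]_{\mathfrak g}+\rho'(\rho(y)x')\phi_{\mathfrak g}(x)-\rho'(\rho(x)x')\phi_{\mathfrak g}(y)$ and $\rho(\phi_{\mathfrak g}(x))[x',y']_{\mathfrak g'}=[\rho(x)x',\phi_{\mathfrak g'}(y')]_{\mathfrak g'}+[\phi_{\mathfrak g'}(x'),\rho(x)y']_{\mathfrak g'}+\rho(\rho'(y')x)\phi_{\mathfrak g'}(x')-\rho(\rho'(x')x)\phi_{\mathfrak g'}(y')$. *)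

(* A finite-dimensional space g of dimension n over a field K
   is modelled as 'rV[K]_n (coordinates in the standard basis e_i);
   its dual g^* is modelled as 'rV[K]_n with the dual basis, so that the
   pairing is <a, x> = \sum_i a_i x_i.  g (x) g is modelled as 'M[K]_n,
   the simple tensor u (x) v being u^T *m v (entry (i,j) = u_i v_j). *)
From HB Require Import structures.
From mathcomp Require Import all_boot all_order all_algebra.
Set Implicit Arguments. Unset Strict Implicit. Unset Printing Implicit Defensive.
Import GRing.Theory.
Local Open Scope ring_scope.

Section HomLie.
Variable K : fieldType.

Definition pairing (n : nat) (a x : 'rV[K]_n) : K := \sum_i a 0 i * x 0 i.

Definition ebasis (n : nat) (j : 'I_n) : 'rV[K]_n := delta_mx 0 j.

Definition linmap (n m : nat) (f : 'rV[K]_n -> 'rV[K]_m) : Prop :=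
  forall (c : K) (x y : 'rV[K]_n), f (c *: x + y) = c *: f x + f y.

Definition HomLie (n : nat) (br : 'rV[K]_n -> 'rV[K]_n -> 'rV[K]_n)
    (phi : 'rV[K]_n -> 'rV[K]_n) : Prop :=
  [/\ linmap phi,
      (forall y, linmap (fun x => br x y)) /\ (forall x, linmap (br x)),
      (forall x y, br x y = - br y x),
      (forall x y, phi (br x y) = br (phi x) (phi y)) &
      (forall x y z, br (phi x) (br y z) + br (phi y) (br z x)
                     + br (phi z) (br x y) = 0)].

Definition weakly_involutive (n : nat) (br : 'rV[K]_n -> 'rV[K]_n -> 'rV[K]_n)
    (phi : 'rV[K]_n -> 'rV[K]_n) : Prop :=
  forall x y, br (phi (phi x)) y = br x y.

Definition HomRep (n m : nat) (br : 'rV[K]_n -> 'rV[K]_n -> 'rV[K]_n)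
    (phi : 'rV[K]_n -> 'rV[K]_n) (beta : 'rV[K]_m -> 'rV[K]_m)
    (rho : 'rV[K]_n -> 'rV[K]_m -> 'rV[K]_m) : Prop :=
  [/\ linmap beta,
      (forall x, linmap (rho x)),
      (forall v, linmap (fun x => rho x v)),
      (forall x v, rho (phi x) (beta v) = beta (rho x v)) &
      (forall x y v, rho (br x y) (beta v)
                     = rho (phi x) (rho y v) - rho (phi y) (rho x v))].

Definition MatchedPair (n m : nat)
    (br : 'rV[K]_n -> 'rV[K]_n -> 'rV[K]_n) (phi : 'rV[K]_n -> 'rV[K]_n)
    (br' : 'rV[K]_m -> 'rV[K]_m -> 'rV[K]_m) (phi' : 'rV[K]_m -> 'rV[K]_m)
    (rho : 'rV[K]_n -> 'rV[K]_m -> 'rV[K]_m)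
    (rho' : 'rV[K]_m -> 'rV[K]_n -> 'rV[K]_n) : Prop :=
  [/\ HomLie br phi /\ HomLie br' phi',
      HomRep br phi phi' rho, HomRep br' phi' phi rho',
      (forall x y x',
         rho' (phi' x') (br x y)
         = br (rho' x' x) (phi y) + br (phi x) (rho' x' y)
           + rho' (rho y x') (phi x) - rho' (rho x x') (phi y)) &
      (forall x' y' x,
         rho (phi x) (br' x' y')
         = br' (rho x x') (phi' y') + br' (phi' x') (rho x y')
           + rho (rho' y' x) (phi' x') - rho (rho' x' x) (phi' y'))].

(* With (br, phi) = ([,]_g, phi_g) this is ad^o : g -> gl(g^* );
   with (br, phi) = ([,]_{g^*}, phi_g^* ) it is the map frak{ad}^o : g^* -> gl(g). *)
Definition adc (n : nat) (br : 'rV[K]_n -> 'rV[K]_n -> 'rV[K]_n)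
    (phi : 'rV[K]_n -> 'rV[K]_n) (x a : 'rV[K]_n) : 'rV[K]_n :=
  \row_j (- pairing a (br (phi x) (ebasis j))).

(* matrix of the linear map ad_z = [z, -] (acting on row vectors: x *m A = [z,x]) *)
Definition admx (n : nat) (br : 'rV[K]_n -> 'rV[K]_n -> 'rV[K]_n)
    (z : 'rV[K]_n) : 'M[K]_n :=
  \matrix_(i, j) (br z (ebasis i)) 0 j.

(* ad_z on g (x) g : (ad_z (x) phi + phi (x) ad_z) t, where phi x = x *m P.
   On u^T *m v this gives (u A)^T (v P) + (u P)^T (v A). *)
Definition adtens (n : nat) (br : 'rV[K]_n -> 'rV[K]_n -> 'rV[K]_n)
    (P : 'M[K]_n) (z : 'rV[K]_n) (t : 'M[K]_n) : 'M[K]_n :=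
  (admx br z)^T *m t *m P + P^T *m t *m admx br z.

Definition Delta (n : nat) (brd : 'rV[K]_n -> 'rV[K]_n -> 'rV[K]_n)
    (x : 'rV[K]_n) : 'M[K]_n :=
  \matrix_(i, j) pairing (brd (ebasis i) (ebasis j)) x.

End HomLie.

(* Pairing against test vectors turns each compatibility condition of the
   matched pair into the vanishing of a scalar form in x, y in g and a, b in
   g^*; the cocycle condition on Delta is the vanishing of the same form, read
   entrywise in the basis e_i (x) e_j.  Exchanging the roles of g and g^* only
   permutes the terms of the form (skew-symmetry and the adjunction defining
   ad^o), so both compatibility conditions reduce to the cocycle condition.
   Weak involutivity is what removes the phi^2 produced when ad^o(phi x) is
   moved across a bracket; with the Hom-Jacobi identity it also makes ad^o a
   representation. *)
From mathcomp Require Import all_boot all_algebra ring.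
Set Implicit Arguments. Unset Strict Implicit. Unset Printing Implicit Defensive.
Import GRing.Theory.
Local Open Scope ring_scope.

Section LinearMaps.
Variables (K : fieldType) (n m : nat) (f : 'rV[K]_n -> 'rV[K]_m).
Hypothesis f_lin : linmap f.

Lemma linmap0 : f 0 = 0.
Proof.
have e := f_lin 1 0 0; rewrite !scale1r !addr0 in e.
by apply: (addrI (f 0)); rewrite addr0 -e.
Qed.

Lemma linmapZ c x : f (c *: x) = c *: f x.
Proof. by have := f_lin c x 0; rewrite !addr0 linmap0 addr0. Qed.

Lemma linmapN x : f (- x) = - f x.
Proof. by rewrite -scaleN1r linmapZ scaleN1r. Qed.

Lemma linmap_sum (c : 'I_n -> K) (v : 'I_n -> 'rV[K]_n) :
  f (\sum_i c i *: v i) = \sum_i c i *: f (v i).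
Proof.
apply: (big_rec2 (fun a b => f a = b)); first exact: linmap0.
by move=> i y1 y2 _ <-; rewrite f_lin.
Qed.

End LinearMaps.

Section Pairing.
Variables (K : fieldType) (n : nat).
Implicit Types (a b x y : 'rV[K]_n) (Q : 'M[K]_n).

Lemma pairingE a x : pairing a x = (a *m x^T) 0 0.
Proof. by rewrite /pairing mxE; apply: eq_bigr => i _; rewrite mxE. Qed.

Lemma pairingC a x : pairing a x = pairing x a.
Proof. by apply: eq_bigr => i _; rewrite mulrC. Qed.

Lemma pairingDr a x y : pairing a (x + y) = pairing a x + pairing a y.
Proof. by rewrite /pairing -big_split; apply: eq_bigr => i _; rewrite mxE mulrDr. Qed.

Lemma pairingZr a x c : pairing a (c *: x) = c * pairing a x.
Proof. by rewrite /pairing mulr_sumr; apply: eq_bigr => i _; rewrite mxE mulrCA. Qed.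

Lemma pairingNr a x : pairing a (- x) = - pairing a x.
Proof. by rewrite -scaleN1r pairingZr mulN1r. Qed.

Lemma pairingBr a x y : pairing a (x - y) = pairing a x - pairing a y.
Proof. by rewrite pairingDr pairingNr. Qed.

Lemma pairingDl a x y : pairing (x + y) a = pairing x a + pairing y a.
Proof. by rewrite !(pairingC _ a) pairingDr. Qed.

Lemma pairingZl a x c : pairing (c *: x) a = c * pairing x a.
Proof. by rewrite !(pairingC _ a) pairingZr. Qed.

Lemma pairingNl a x : pairing (- x) a = - pairing x a.
Proof. by rewrite !(pairingC _ a) pairingNr. Qed.

Lemma pairingBl a x y : pairing (x - y) a = pairing x a - pairing y a.
Proof. by rewrite pairingDl pairingNl. Qed.

Lemma pairing_ebasis a j : pairing a (ebasis K j) = a 0 j.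
Proof. by rewrite pairingE /ebasis trmx_delta -colE mxE. Qed.

Lemma pairing_nondegenerate a b : (forall y, pairing a y = pairing b y) -> a = b.
Proof. by move=> eq_ab; apply/rowP => j; rewrite -!pairing_ebasis eq_ab. Qed.

Lemma pairing_trmx Q a x : pairing (a *m Q^T) x = pairing a (x *m Q).
Proof. by rewrite !pairingE trmx_mul mulmxA. Qed.

Lemma pairing_sumr a (c : 'I_n -> K) (v : 'I_n -> 'rV[K]_n) :
  pairing a (\sum_i c i *: v i) = \sum_i c i * pairing a (v i).
Proof.
apply: (big_rec2 (fun x s => pairing a x = s)).
  by rewrite /pairing big1 // => i _; rewrite mxE mulr0.
by move=> i y1 y2 _ <-; rewrite pairingDr pairingZr.
Qed.

Lemma pairing_suml a (c : 'I_n -> K) (v : 'I_n -> 'rV[K]_n) :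
  pairing (\sum_i c i *: v i) a = \sum_i c i * pairing (v i) a.
Proof. by rewrite pairingC pairing_sumr; apply: eq_bigr => i _; rewrite pairingC. Qed.

Lemma pairing_adc (br : 'rV[K]_n -> 'rV[K]_n -> 'rV[K]_n) phi x a y :
    (forall z, linmap (br z)) ->
  pairing (adc br phi x a) y = - pairing a (br (phi x) y).
Proof.
move=> br_linr; rewrite {2}(row_sum_delta y) linmap_sum // pairing_sumr -sumrN.
by apply: eq_bigr => j _; rewrite mxE mulrC -mulrN.
Qed.

End Pairing.

Section CoadjointRepresentation.
Variables (K : fieldType) (n : nat) (Q : 'M[K]_n).
Variable br : 'rV[K]_n -> 'rV[K]_n -> 'rV[K]_n.
Hypothesis homLie_br : HomLie br (fun x => x *m Q).

Lemma hom_Jacobi_l x y z :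
  br (br x y) (z *m Q) = br (x *m Q) (br y z) - br (y *m Q) (br x z).
Proof.
case: homLie_br => _ [_ br_linr] skew _ jacobi.
have := jacobi x y z; rewrite (skew z x) linmapN // addrC => /eqP.
by rewrite addr_eq0 skew eqr_opp => /eqP ->.
Qed.

Hypothesis wi_br : weakly_involutive br (fun x => x *m Q).

Lemma adc_HomRep :
  HomRep br (fun x => x *m Q) (fun a => a *m Q^T) (adc br (fun x => x *m Q)).
Proof.
case: homLie_br => _ [br_linl br_linr] _ mult _.
have {}mult x y : br x y *m Q = br (x *m Q) (y *m Q) := mult x y.
have {}wi x y : br (x *m Q *m Q) y = br x y := wi_br x y.
split.
- by move=> c a b; rewrite mulmxDl scalemxAl.
- move=> x c a b; apply: pairing_nondegenerate => y.
  by rewrite pairingDl pairingZl !pairing_adc // pairingDl pairingZl opprD mulrN.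
- move=> a c x y; apply: pairing_nondegenerate => z.
  rewrite pairingDl pairingZl !pairing_adc // mulmxDl -scalemxAl.
  by rewrite (br_linl z) pairingDr pairingZr opprD mulrN.
- move=> x a; apply: pairing_nondegenerate => y.
  by rewrite pairing_adc // pairing_trmx mult wi pairing_trmx pairing_adc.
- move=> x y a; apply: pairing_nondegenerate => z.
  rewrite pairingBl !pairing_adc // pairing_trmx mult !wi hom_Jacobi_l pairingBr.
  ring.
Qed.

End CoadjointRepresentation.

(* <Delta[x,y] - ad_{phi x} Delta(y) + ad_{phi y} Delta(x), a (x) b> when
   br1 = [,]_g and br2 = [,]_{g^*}. *)
Definition cocycle_defect (K : fieldType) (n : nat)
    (br1 br2 : 'rV[K]_n -> 'rV[K]_n -> 'rV[K]_n) (Q : 'M[K]_n) (x y a b : 'rV[K]_n) : K :=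
  let ad := adc br1 (fun v => v *m Q) in
  pairing (br2 a b) (br1 x y)
  + pairing (br2 (ad x a) (b *m Q^T)) y + pairing (br2 (a *m Q^T) (ad x b)) y
  - pairing (br2 (ad y a) (b *m Q^T)) x - pairing (br2 (a *m Q^T) (ad y b)) x.

Section Compatibility.
Variables (K : fieldType) (n : nat) (Q : 'M[K]_n).
Variables br1 br2 : 'rV[K]_n -> 'rV[K]_n -> 'rV[K]_n.
Hypothesis homLie1 : HomLie br1 (fun x => x *m Q).
Hypothesis homLie2 : HomLie br2 (fun a => a *m Q^T).
Hypothesis wi1 : weakly_involutive br1 (fun x => x *m Q).

Local Notation ad1 := (adc br1 (fun v => v *m Q)).
Local Notation ad2 := (adc br2 (fun v => v *m Q^T)).

Lemma pairing_adc_adc a b x z :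
  pairing (ad1 (ad2 b x) (a *m Q^T)) z = - pairing (br2 (ad1 z a) (b *m Q^T)) x.
Proof.
case: homLie1 => _ [_ linr1] skew1 mult1 _; case: homLie2 => _ [_ linr2] skew2 _ _.
have {}mult1 u v : br1 u v *m Q = br1 (u *m Q) (v *m Q) := mult1 u v.
have wi u v : br1 (u *m Q *m Q) v = br1 u v := wi1 u v.
rewrite pairing_adc // pairing_trmx mult1 wi skew1 pairingNr opprK.
have -> : pairing a (br1 (z *m Q) (ad2 b x)) = - pairing (ad1 z a) (ad2 b x).
  by rewrite pairing_adc // opprK.
by rewrite pairingC pairing_adc // skew2 pairingNr opprK pairingC.
Qed.

Lemma pairing_compat_defect a b x z :
  pairing (br2 (ad1 x a) (b *m Q^T) + br2 (a *m Q^T) (ad1 x b)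
           + ad1 (ad2 b x) (a *m Q^T) - ad1 (ad2 a x) (b *m Q^T)) z
  - pairing (ad1 (x *m Q) (br2 a b)) z
  = cocycle_defect br1 br2 Q x z a b.
Proof.
case: homLie1 => _ [_ linr1] _ _ _; case: homLie2 => _ _ skew2 _ _.
rewrite !pairingDl pairingNl !pairing_adc_adc /cocycle_defect pairing_adc // wi1.
by rewrite (skew2 (ad1 z b)) pairingNl; ring.
Qed.

Lemma compat_iff_cocycle_defect0 :
  (forall a b x, ad1 (x *m Q) (br2 a b)
     = br2 (ad1 x a) (b *m Q^T) + br2 (a *m Q^T) (ad1 x b)
       + ad1 (ad2 b x) (a *m Q^T) - ad1 (ad2 a x) (b *m Q^T))
  <-> (forall x z a b, cocycle_defect br1 br2 Q x z a b = 0).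
Proof.
split=> [compat x z a b | defect0 a b x].
  by rewrite -pairing_compat_defect -compat subrr.
apply: pairing_nondegenerate => z; apply/eqP.
by rewrite eq_sym -subr_eq0 pairing_compat_defect defect0.
Qed.

Lemma cocycle_defect_dual x y a b :
  cocycle_defect br1 br2 Q x y a b = cocycle_defect br2 br1 Q^T a b x y.
Proof.
case: homLie1 => _ [_ linr1] skew1 _ _; case: homLie2 => _ [_ linr2] skew2 _ _.
have adj2 c w v : pairing (br2 (c *m Q^T) w) v = - pairing w (ad2 c v).
  by rewrite (pairingC w) pairing_adc // opprK pairingC.
have adj1 u w c : pairing (br1 (u *m Q) w) c = - pairing (ad1 u c) w.
  by rewrite pairing_adc // opprK pairingC.
rewrite /cocycle_defect trmxK (skew2 (ad1 x a)) (skew2 (ad1 y a)).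
rewrite (skew1 (ad2 a x)) (skew1 (ad2 b x)) !pairingNl !adj1 !adj2 (pairingC (br2 a b)).
ring.
Qed.

End Compatibility.

Section TensorCoordinates.
Variables (K : fieldType) (n : nat).
Implicit Types (M N P : 'M[K]_n) (a b x y : 'rV[K]_n).

Definition mxform M a b : K := (a *m M *m b^T) 0 0.

Lemma mxform_ebasis M i j : mxform M (ebasis K i) (ebasis K j) = M i j.
Proof. by rewrite /mxform /ebasis -rowE trmx_delta -colE !mxE. Qed.

Lemma mxformB M N a b : mxform (M - N) a b = mxform M a b - mxform N a b.
Proof. by rewrite /mxform mulmxBr mulmxBl mxE [X in _ + X]mxE. Qed.

Lemma mxform_Delta (brd : 'rV[K]_n -> 'rV[K]_n -> 'rV[K]_n) y a b :
    (forall v, linmap (fun u => brd u v)) -> (forall u, linmap (brd u)) ->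
  mxform (Delta brd y) a b = pairing (brd a b) y.
Proof.
move=> linl linr.
have -> : pairing (brd a b) y
    = \sum_i \sum_j a 0 i * (b 0 j * pairing (brd (ebasis K i) (ebasis K j)) y).
  rewrite {1}(row_sum_delta a) (linmap_sum (linl _)) pairing_suml.
  apply: eq_bigr => i _.
  by rewrite {1}(row_sum_delta b) (linmap_sum (linr _)) pairing_suml mulr_sumr.
rewrite /mxform mxE.
under eq_bigr => j _ do rewrite !mxE mulr_suml.
rewrite exchange_big /=; apply: eq_bigr => i _; apply: eq_bigr => j _.
by rewrite !mxE; ring.
Qed.

Lemma adc_mulmx_admx (br : 'rV[K]_n -> 'rV[K]_n -> 'rV[K]_n) P x a :
  adc br (fun v => v *m P) x a = - (a *m (admx br (x *m P))^T).
Proof.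
apply/rowP => j; rewrite !mxE /pairing; congr (- _).
by apply: eq_bigr => i _; rewrite !mxE.
Qed.

Lemma mxform_adtens (br : 'rV[K]_n -> 'rV[K]_n -> 'rV[K]_n) P x t a b :
  mxform (adtens br P (x *m P) t) a b
  = - mxform t (adc br (fun v => v *m P) x a) (b *m P^T)
    - mxform t (a *m P^T) (adc br (fun v => v *m P) x b).
Proof.
rewrite /mxform /adtens !adc_mulmx_admx linearN /= !mulNmx !mulmxN.
rewrite [X in - X - _]mxE [X in _ - X]mxE !opprK !trmx_mul !trmxK.
by rewrite mulmxDr mulmxDl !mulmxA mxE.
Qed.

End TensorCoordinates.

Lemma Delta_cocycle_iff (K : fieldType) (n : nat) (P : 'M[K]_n)
    (brg brd : 'rV[K]_n -> 'rV[K]_n -> 'rV[K]_n) (x y : 'rV[K]_n) :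
  HomLie brd (fun a => a *m P^T) ->
  Delta brd (brg x y)
    = adtens brg P (x *m P) (Delta brd y) - adtens brg P (y *m P) (Delta brd x)
  <-> (forall a b, cocycle_defect brg brd P x y a b = 0).
Proof.
case=> _ [linl linr] _ _ _.
have mxform_diff a b : mxform (Delta brd (brg x y)
      - (adtens brg P (x *m P) (Delta brd y) - adtens brg P (y *m P) (Delta brd x))) a b
    = cocycle_defect brg brd P x y a b.
  by rewrite !mxformB !mxform_adtens !mxform_Delta // /cocycle_defect; ring.
split=> [cocycle a b | defect0].
  by rewrite -mxform_diff cocycle subrr /mxform mulmx0 mul0mx mxE.
apply/eqP; rewrite -subr_eq0; apply/eqP/matrixP => i j.
by rewrite -mxform_ebasis mxform_diff defect0 mxE.
Qed.

Unset Implicit Arguments.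

Theorem theorem3p7 (K : fieldType) (n : nat) (P : 'M[K]_n)
    (brg brd : 'rV[K]_n -> 'rV[K]_n -> 'rV[K]_n) :
  HomLie brg (fun x => x *m P) ->
  HomLie brd (fun a => a *m P^T) ->
  weakly_involutive brg (fun x => x *m P) ->
  weakly_involutive brd (fun a => a *m P^T) ->
  (MatchedPair brg (fun x => x *m P) brd (fun a => a *m P^T)
     (adc brg (fun x => x *m P)) (adc brd (fun a => a *m P^T))
   <->
   (forall x y : 'rV[K]_n,
      Delta brd (brg x y)
      = adtens brg P (x *m P) (Delta brd y) - adtens brg P (y *m P) (Delta brd x))).
Proof.
move=> homLie_g homLie_d wi_g wi_d.
have homLie_g' : HomLie brg (fun x => x *m P^T^T) by rewrite trmxK.
have compat_g := compat_iff_cocycle_defect0 homLie_g homLie_d wi_g.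
have compat_d := compat_iff_cocycle_defect0 homLie_d homLie_g' wi_d.
rewrite trmxK in compat_d.
have Delta_iff x y := Delta_cocycle_iff brg x y homLie_d.
split=> [[_ _ _ _ /compat_g defect0] x y | cocycle].
  by apply/Delta_iff => a b; apply: defect0.
have defect0 x y a b : cocycle_defect brg brd P x y a b = 0.
  by move: a b; apply/Delta_iff.
split=> //; first exact: adc_HomRep.
- by have := adc_HomRep homLie_d wi_d; rewrite trmxK.
- by apply/compat_d => a b x y; rewrite -cocycle_defect_dual.
- exact/compat_g.
Qed.
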